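(* In the setting described in the context (the random experiment for SA2), for every service $i\in S$ and every node $j\in V$, $\Pr(j\in X^\tau_i)\ge\delta\,(1-\exp(-x_{ij}))$.
   Context: An SPSC instance: finite sets $S$ (services), $V$ (nodes), $U$ (users); sizes $s_i>0$; capacities $c_j>0$; for each user $k$ a service $i_k\in S$, a set $T_k\subseteq V$, a reward $w_k>0$. Let $\{x_{ij}\},\{y_k\}$ be an optimal solution of the LP with nonnegative variables: maximize $\sum_ky_kw_k$ s.t. $y_k\le\sum_{j\in T_k}x_{i_kj}$, $y_k\le1$; $\sum_ix_{ij}s_i\le c_j$; $x_{ij}=0$ if $s_i>c_j$; $0\le x_{ij}\le1$. Let $\beta:=1/4,\gamma:=1/2,\delta:=1/4$, $\mathbb N=\{1,2,\dots\}$. For $j\in V$: $P_j^\oplus:=\{i:c_j/2<s_i\le c_j\}$, $P_j^\ominus:=\{i:c_j/4<s_i\le c_j/2\}$, $P_j^q:=\{i:\gamma^qc_j\beta<s_i\le\gamma^{q-1}c_j\beta\}$ ($q\in\mathbb N$); $d_j^q:=\sum_{i\in P_j^q}x_{ij}$ for $q\in\mathbb N\cup\{\oplus,\ominus\}$; $v_j:=\delta c_j/\sum_{i:s_i\le c_j\beta}s_ix_{ij}$; $n_j^q:=\lceil v_jd_j^q\rceil$; $h_j:=d_j^\ominus$ if $d_j^\ominus<2$, else $d_j^\ominus/2$. A construction map $\zeta:V\to\{1,2,3\}$ has slot set $\Lambda(\zeta)$ (slot $\sigma$ has node $\nu(\sigma)$, class $\kappa(\sigma)$): for each $j$, one slot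 of class $\oplus$ if $\zeta(j)=1$; two slots of class $\ominus$ if $\zeta(j)=2$; for each $q\in\mathbb N$, $n_j^q$ slots of class $q$ if $\zeta(j)=3$; no other slots on $j$. A slot allocation of $\Lambda$ is $\tau:\Lambda\to S$ with $\tau(\sigma)\in P^{\kappa(\sigma)}_{\nu(\sigma)}$; $X^\tau_i:=\{j:\exists\sigma\in\Lambda,\nu(\sigma)=j,\tau(\sigma)=i\}$. Random experiment: $\zeta(j)$ independent over $j$, equal to $1,2,3$ with probabilities $\delta d_j^\oplus,\ \delta h_j,\ 1-\delta d_j^\oplus-\delta h_j$; given $\zeta$, each slot $\sigma\in\Lambda(\zeta)$ independently gets $\tau(\sigma)=i$ with probability $x_{i\nu(\sigma)}/d^{\kappa(\sigma)}_{\nu(\sigma)}$, $i\in P^{\kappa(\sigma)}_{\nu(\sigma)}$. *)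

From HB Require Import structures.
From mathcomp Require Import all_boot all_order all_algebra.
From mathcomp Require Import reals.
From mathcomp Require Import sequences exp.
Set Implicit Arguments. Unset Strict Implicit. Unset Printing Implicit Defensive.
Import Order.TTheory GRing.Theory Num.Theory.
Local Open Scope ring_scope.

(* Slot classes: plus (+), minus (-), and q in N = {1,2,...} (Cq q, only q>=1 used). *)
Inductive cls := Cplus | Cminus | Cq of nat.

Section SPSC.
Variables (R : realType) (S V U : finType).

Section LP.
Variables (s : S -> R) (c : V -> R) (svc : U -> S) (T : U -> {set V}) (w : U -> R).

Definition lp_feasible (x : S -> V -> R) (y : U -> R) : Prop :=
  (forall k, 0 <= y k) /\
  (forall k, y k <= \sum_(j in T k) x (svc k) j) /\
  (forall k, y k <= 1) /\
  (forall j, \sum_(i : S) x i j * s i <= c j) /\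
  (forall i j, c j < s i -> x i j = 0) /\
  (forall i j, 0 <= x i j <= 1).

Definition lp_objective (y : U -> R) : R := \sum_(k : U) y k * w k.

Definition lp_optimal (x : S -> V -> R) (y : U -> R) : Prop :=
  lp_feasible x y /\
  (forall x' y', lp_feasible x' y' -> lp_objective y' <= lp_objective y).
End LP.

Section Experiment.
Variables (s : S -> R) (c : V -> R) (x : S -> V -> R).

Definition beta : R := 1 / 4.
Definition gamma : R := 1 / 2.
Definition delta : R := 1 / 4.

Definition inP (j : V) (k : cls) (i : S) : bool :=
  match k with
  | Cplus => (c j / 2 < s i) && (s i <= c j)
  | Cminus => (c j / 4 < s i) && (s i <= c j / 2)
  | Cq q => (gamma ^+ q * c j * beta < s i) && (s i <= gamma ^+ q.-1 * c j * beta)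
  end.

Definition dd (j : V) (k : cls) : R := \sum_(i | inP j k i) x i j.

Definition vv (j : V) : R :=
  delta * c j / \sum_(i | s i <= c j * beta) s i * x i j.

Definition nn (j : V) (q : nat) : nat := `|Num.ceil (vv j * dd j (Cq q))|%N.

Definition hh (j : V) : R :=
  if dd j Cminus < 2 then dd j Cminus else dd j Cminus / 2.

(* A bound on the classes q that can be nonempty at node j: if i \in P_j^q
   then 2^(q-1) <= c_j beta / s_i, hence q <= truncn (c_j beta / s_i) + 1.
   For q > qbound j the class P_j^q is empty, d_j^q = 0 and n_j^q = 0, so
   listing only q in 1..qbound j gives exactly the slots of the paper. *)
Definition qbound (j : V) : nat := \max_(i : S) (Num.truncn (c j * beta / s i)).+1.

(* The construction map zeta : V -> {1,2,3} is encoded with values in 'I_3: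
   ordinal 0 <-> 1, ordinal 1 <-> 2, ordinal 2 <-> 3.
   slots j z = list of the classes of the slots on node j when zeta(j) = z. *)
Definition slots (j : V) (z : 'I_3) : seq cls :=
  match val z with
  | 0 => [:: Cplus]
  | 1 => [:: Cminus; Cminus]
  | _ => flatten [seq nseq (nn j q) (Cq q) | q <- iota 1 (qbound j)]
  end.

Definition zeta_prob (j : V) (z : 'I_3) : R :=
  match val z with
  | 0 => delta * dd j Cplus
  | 1 => delta * hh j
  | _ => 1 - delta * dd j Cplus - delta * hh j
  end.

Definition slot_prob (j : V) (k : cls) (i : S) : R :=
  if inP j k i then x i j / dd j k else 0.

Definition alloc_prob (j : V) (z : 'I_3) (t : (size (slots j z)).-tuple S) : R :=
  \prod_(m < size (slots j z)) slot_prob j (nth Cplus (slots j z) m) (tnth t m).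

Definition Alloc (zeta : {ffun V -> 'I_3}) : finType :=
  {dffun forall j : V, (size (slots j (zeta j))).-tuple S}.

Definition prob (E : forall zeta : {ffun V -> 'I_3}, Alloc zeta -> bool) : R :=
  \sum_(zeta : {ffun V -> 'I_3})
     (\prod_(j : V) zeta_prob j (zeta j)) *
     \sum_(tau : Alloc zeta) (\prod_(j : V) alloc_prob (tau j)) * (E zeta tau)%:R.

Definition inX (i : S) (j : V) (zeta : {ffun V -> 'I_3}) (tau : Alloc zeta) : bool :=
  i \in (tau j : seq S).

End Experiment.
End SPSC.

From Pilot Require Import Defs.
From HB Require Import structures.
From mathcomp Require Import all_boot all_order all_algebra.
From mathcomp Require Import reals.
From mathcomp Require Import sequences exp convex interval_inference.
From mathcomp Require Import lra ring.
Set Implicit Arguments. Unset Strict Implicit. Unset Printing Implicit Defensive.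
Import Order.TTheory GRing.Theory Num.Theory.
Local Open Scope ring_scope.

(* Given zeta, the slots are filled independently, so the event that i is
   allocated on j only involves node j, every other node contributing total
   mass 1.  On node j, i lies in exactly one size class.  In class (+) the
   single slot holds i with probability delta x_ij.  In class (-) the two
   slots miss i with probability (1 - p)^2, p = x_ij / d_j, and the halving
   of h_j for d_j >= 2 is paid for by e^-x >= (1 - x/2)^2.  In class q the
   n_j^q >= v_j d_j^q slots miss i with probability at most e^(-v_j x_ij),
   while the capacity constraint gives Pr(zeta(j) = 3) >= 1/4 and
   Pr(zeta(j) = 3) v_j >= 1/4; concavity of t |-> 1 - e^-t concludes. *)

Lemma bigA_distr_dffun (R : comPzSemiRingType) (I : finType) (T_ : I -> finType)
    (F : forall i, T_ i -> R) :
  \prod_i \sum_(a : T_ i) F i a = \sum_(f : {dffun forall i, T_ i}) \prod_i F i (f i).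
Proof.
pose P_ i := [ffun a : T_ i => F i a].
transitivity (\prod_i \sum_(a in tagged_with T_ i) untag 0 (P_ i) a).
  apply: eq_bigr => i _; rewrite -(big_tag (fun i a => P_ i a)).
  by apply: eq_bigr => a _; rewrite ffunE.
rewrite bigA_distr_big_dep -(@big_fprod R 0 1 *%R +%R I T_ P_).
rewrite (reindex (@dffun_of_fprod I T_)); last exact/onW_bij/dffun_of_fprod_bij.
by apply: eq_bigr => f _; apply: eq_bigr => i _; rewrite /P_ !ffunE.
Qed.

Lemma bigA_distr_tuple (R : comPzSemiRingType) (T : finType) (n : nat) (F : 'I_n -> T -> R) :
  \prod_(m < n) \sum_(a : T) F m a = \sum_(t : n.-tuple T) \prod_(m < n) F m (tnth t m).
Proof.
rewrite bigA_distr_bigA (reindex (fun f : {ffun 'I_n -> T} => [tuple f m | m < n])).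
  by apply: eq_bigr => f _; apply: eq_bigr => m _; rewrite tnth_mktuple.
apply: onW_bij; exists (fun t : n.-tuple T => [ffun m => tnth t m]).
  by move=> f; apply/ffunP => m; rewrite ffunE tnth_mktuple.
by move=> t; apply: eq_from_tnth => m; rewrite tnth_mktuple ffunE.
Qed.

Lemma natr_mem_tuple (R : comPzRingType) (T : eqType) n (t : n.-tuple T) (a : T) :
  (a \in (t : seq T))%:R = 1 - \prod_(m < n) (tnth t m != a)%:R :> R.
Proof.
have [/tnthP[m ->]|t_a] := boolP (a \in (t : seq T)).
  by rewrite (bigD1 m) //= eqxx mul0r subr0.
rewrite big1 ?subrr // => m _.
by case: eqP => // tm_a; rewrite -tm_a mem_tnth in t_a.
Qed.

Local Notation z1 := (@Ordinal 3 0 isT).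
Local Notation z2 := (@Ordinal 3 1 isT).
Local Notation z3 := (@Ordinal 3 2 isT).

Lemma sum_ord3 (M : nmodType) (f : 'I_3 -> M) :
  \sum_(z < 3) f z = f z1 + f z2 + f z3.
Proof. by rewrite !big_ord_recl big_ord0 addr0 addrA; congr (f _ + f _ + f _); exact: val_inj. Qed.

Section ExpBounds.
Variable R : realType.
Implicit Types a l p t v F : R.

Lemma sqr_half_le_expR t : t <= 2 -> (1 - t / 2) ^+ 2 <= expR (- t).
Proof.
move=> t_le2; have half_ge0 : 0 <= 1 - t / 2 by lra.
have -> : expR (- t) = expR (- (t / 2)) ^+ 2 by rewrite -expRM_natl; congr expR; field.
by rewrite lerXn2r ?nnegrE ?expR_ge0 //; have := expR_ge1Dx (- (t / 2)); lra.
Qed.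

Lemma exprn_oneB_le_expR p n : 0 <= p <= 1 -> (1 - p) ^+ n <= expR (- (n%:R * p)).
Proof.
case/andP=> p_ge0 p_le1; rewrite -mulrN expRM_natl.
rewrite lerXn2r ?nnegrE ?expR_ge0 ?subr_ge0 //.
by have := expR_ge1Dx (- p); lra.
Qed.

Lemma scale_oneB_expR_le l t : 0 <= l <= 1 ->
  l * (1 - expR (- t)) <= 1 - expR (- (l * t)).
Proof.
case/andP=> l_ge0 l_le1; have := @convex_expR R (Itv01 l_ge0 l_le1) (- t) 0.
by rewrite !convRE /= mulr0 addr0 expR0 mulr1 mulrN /unstable.onem; lra.
Qed.

Lemma oneB_expR_rescale a F v t : 0 <= a -> 0 <= v -> 0 <= t ->
  a <= F -> a <= F * v -> a * (1 - expR (- t)) <= F * (1 - expR (- (v * t))).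
Proof.
move=> a_ge0 v_ge0 t_ge0 aF aFv.
have e_le1 : expR (- t) <= 1 by rewrite expR_le1; lra.
have F_ge0 : 0 <= F by lra.
have [v_le1|v_gt1] := lerP v 1.
  apply: le_trans (_ : F * v * (1 - expR (- t)) <= _).
    by apply: ler_wpM2r; lra.
  rewrite -mulrA; apply: ler_wpM2l => //.
  by apply: scale_oneB_expR_le; rewrite v_ge0 v_le1.
have e_vt : expR (- (v * t)) <= expR (- t).
  by rewrite ler_expR lerN2 ler_peMl //; exact: ltW.
apply: le_trans (_ : F * (1 - expR (- t)) <= _); first by apply: ler_wpM2r; lra.
by apply: ler_wpM2l => //; lra.
Qed.

End ExpBounds.

Section SizeClasses.
Variables (R : realType) (S V : finType) (s : S -> R) (c : V -> R).
Hypotheses (s_gt0 : forall i, 0 < s i) (c_gt0 : forall j, 0 < c j).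

Local Notation inP := (@inP R S V s c).

Lemma inP_Cq_inj j i a b : inP j (Cq a) i -> inP j (Cq b) i -> a = b.
Proof.
have cb_ge0 : 0 <= c j * beta R by rewrite mulr_ge0 ?ltW // /beta; lra.
have no_lt a' b' : (a' < b')%N -> inP j (Cq a') i -> inP j (Cq b') i -> False.
  move=> ab /andP[lo_a _] /andP[_ hi_b].
  have : gamma R ^+ b'.-1 <= gamma R ^+ a'.
    have g_ge0 : 0 <= gamma R by rewrite /gamma; lra.
    have g_le1 : gamma R <= 1 by rewrite /gamma; lra.
    apply: ler_wiXn2l => //; rewrite -ltnS prednK //; exact: leq_ltn_trans ab.
  by move/(ler_wpM2r cb_ge0); move: lo_a hi_b; rewrite -!mulrA => *; lra.
move=> Pa Pb; case: (ltngtP a b) => // ab.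
  by case: (no_lt a b).
by case: (no_lt b a).
Qed.

Lemma inP_Cq_le j i q : (0 < q)%N -> inP j (Cq q) i -> s i <= c j * beta R.
Proof.
move=> q_gt0 /andP[_ s_le]; apply: le_trans s_le _; rewrite -mulrA ler_piMl //.
  by rewrite mulr_ge0 ?ltW // /beta; lra.
by rewrite exprn_ile1 // /gamma; lra.
Qed.

Lemma inP_Cq_exists j i : s i <= c j * beta R ->
  exists2 q, q \in iota 1 (qbound s c j) & inP j (Cq q) i.
Proof.
move=> small_i; have si_gt0 := s_gt0 i.
set r := c j * beta R / s i.
have r_ge1 : 1 <= r by rewrite /r ler_pdivlMr // mul1r.
have cb_rs : c j * beta R = r * s i by rewrite /r divfK // gt_eqF.
set t := Num.truncn r.
have t_gt0 : (0 < t)%N by rewrite truncn_gt0.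
have t_le_r : t%:R <= r by rewrite /t truncn_le; lra.
have r_lt_t1 : r < t.+1%:R := truncnS_gt r.
set e := trunc_log 2 t.
have e_le_t : (2 ^ e <= t)%N := @trunc_logP 2 t isT t_gt0.
have t_lt_e1 : (t < 2 ^ e.+1)%N := @trunc_log_ltn 2 t isT.
exists e.+1.
  rewrite mem_iota /= add1n ltnS /qbound; apply: leq_trans (leq_bigmax i); rewrite ltnS.
  exact: leq_trans (ltnW (ltn_expl e (isT : (1 < 2)%N))) e_le_t.
rewrite /Defs.inP /= /gamma div1r !exprVn -!mulrA cb_rs.
have two_e1 : 0 < 2 ^+ e.+1 :> R by rewrite exprn_gt0.
have two_e : 0 < 2 ^+ e :> R by rewrite exprn_gt0.
apply/andP; split.
  rewrite mulrA -[X in _ < X]mul1r ltr_pM2r // mulrC ltr_pdivrMr // mul1r.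
  by apply: lt_le_trans r_lt_t1 _; rewrite -natrX ler_nat.
rewrite mulrA -[X in X <= _]mul1r ler_pM2r // mulrC ler_pdivlMr // mul1r.
by apply: le_trans t_le_r; rewrite -natrX ler_nat.
Qed.

Lemma size_class j i : s i <= c j -> [\/ inP j Cplus i, inP j Cminus i |
  exists2 q, q \in iota 1 (qbound s c j) & inP j (Cq q) i].
Proof.
move=> si_le_cj; case: (ltrP (c j / 2) (s i)) => [big|not_big].
  by apply: Or31; rewrite /Defs.inP big si_le_cj.
case: (ltrP (c j / 4) (s i)) => [mid|small].
  by apply: Or32; rewrite /Defs.inP mid not_big.
by apply/Or33/inP_Cq_exists; rewrite /beta; lra.
Qed.

End SizeClasses.

Section Experiment.
Variables (R : realType) (S V : finType) (s : S -> R) (c : V -> R) (x : S -> V -> R).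
Hypothesis x_ge0 : forall i j, 0 <= x i j.

Local Notation dd := (@dd R S V s c x).
Local Notation nn := (@nn R S V s c x).
Local Notation slots := (@slots R S V s c x).
Local Notation slot_prob := (@slot_prob R S V s c x).
Local Notation alloc_prob := (@alloc_prob R S V s c x _ _).
Local Notation zeta_prob := (@zeta_prob R S V s c x).
Local Notation vv := (@vv R S V s c x).
Local Notation inP := (@inP R S V s c).
Local Notation prob := (@prob R S V s c x).
Local Notation inX := (@inX R S V s c x).

Definition slot_mass j k := \sum_(i : S) slot_prob j k i.

Definition node_mass j z := \sum_(t : (size (slots j z)).-tuple S) alloc_prob t.

Definition node_hit j z i :=
  \sum_(t : (size (slots j z)).-tuple S) alloc_prob t * (i \in (t : seq S))%:R.

Lemma dd_ge0 j k : 0 <= dd j k.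
Proof. exact: sumr_ge0. Qed.

Lemma dd_ge_x j k i : inP j k i -> x i j <= dd j k.
Proof. by move=> Pi; rewrite /Defs.dd (bigD1 i) //= lerDl sumr_ge0. Qed.

Lemma slot_prob_ge0 j k i : 0 <= slot_prob j k i.
Proof. by rewrite /slot_prob; case: ifP => // _; rewrite divr_ge0 ?dd_ge0. Qed.

(* For d_j^k = 0 every slot_prob j k i is x i j / 0 = 0. *)
Lemma slot_massE j k : slot_mass j k = (dd j k != 0)%:R.
Proof.
rewrite /slot_mass /slot_prob -big_mkcond /= -mulr_suml.
change (dd j k / dd j k = (dd j k != 0)%:R).
by have [->|dn0] := eqVneq (dd j k) 0; rewrite ?mul0r // divff.
Qed.

Lemma node_massE j z : node_mass j z = \prod_(k <- slots j z) slot_mass j k.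
Proof. by rewrite (big_nth Cplus) big_mkord bigA_distr_tuple. Qed.

Lemma node_hitE j z i : node_hit j z i =
  \prod_(k <- slots j z) slot_mass j k - \prod_(k <- slots j z) (slot_mass j k - slot_prob j k i).
Proof.
have miss k : \sum_(a : S) slot_prob j k a * (a != i)%:R = slot_mass j k - slot_prob j k i.
  rewrite /slot_mass (bigD1 i) //= [in RHS](bigD1 i) //= eqxx mulr0 add0r addrAC subrr add0r.
  by apply: eq_bigr => a ->; rewrite mulr1.
pose n := size (slots j z); pose k_ (m : 'I_n) := nth Cplus (slots j z) m.
have -> : node_hit j z i = node_mass j z -
    \sum_(t : n.-tuple S) \prod_(m < n) (slot_prob j (k_ m) (tnth t m) * (tnth t m != i)%:R).
  rewrite /node_hit /node_mass -sumrB; apply: eq_bigr => t _.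
  by rewrite natr_mem_tuple mulrBr mulr1 /alloc_prob -big_split.
rewrite node_massE -(bigA_distr_tuple (fun m a => slot_prob j (k_ m) a * (a != i)%:R)).
congr (_ - _); rewrite [RHS](big_nth Cplus) big_mkord.
by apply: eq_bigr => m _; exact: miss.
Qed.

Lemma node_hit_ge0 j z i : 0 <= node_hit j z i.
Proof.
by apply: sumr_ge0 => t _; rewrite mulr_ge0 ?ler0n ?prodr_ge0 // => m _; exact: slot_prob_ge0.
Qed.

Lemma big_slots3 j (F : cls -> R) :
  \prod_(k <- slots j z3) F k = \prod_(q <- iota 1 (qbound s c j)) F (Cq q) ^+ nn j q.
Proof.
rewrite /Defs.slots /= big_flatten big_map.
by apply: eq_bigr => q _; rewrite big_nseq iter_mulr_1.
Qed.

Lemma nn_gt0_dd_neq0 j q : (0 < nn j q)%N -> dd j (Cq q) != 0.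
Proof. by apply: contraTneq => d0; rewrite /Defs.nn d0 mulr0 ceil0. Qed.

Lemma slot_mass_expr_nn j q : slot_mass j (Cq q) ^+ nn j q = 1.
Proof.
have [->|/nn_gt0_dd_neq0 dn0] := posnP (nn j q); first by rewrite expr0.
by rewrite slot_massE dn0 expr1n.
Qed.

Lemma node_mass3 j : node_mass j z3 = 1.
Proof. by rewrite node_massE big_slots3 big1 // => q _; rewrite slot_mass_expr_nn. Qed.

Lemma node_mass_total j : \sum_(z < 3) zeta_prob j z * node_mass j z = 1.
Proof.
rewrite sum_ord3 node_mass3 !node_massE /Defs.slots /zeta_prob /= !big_cons !big_nil.
rewrite !slot_massE !mulr1 /Defs.hh.
have [->|dp_neq0] := eqVneq (dd j Cplus) 0; have [->|dm_neq0] := eqVneq (dd j Cminus) 0;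
  rewrite ?ltr0n //= ?mulr0 ?mulr1 ?subr0; lra.
Qed.

Lemma prob_inX i j :
  prob (inX i j) = \sum_(z < 3) zeta_prob j z * node_hit j z i.
Proof.
pose G j' z := if j' == j then node_hit j' z i else node_mass j' z.
have inner (zeta : {ffun V -> 'I_3}) :
    \sum_(tau : Alloc s c x zeta) (\prod_j' alloc_prob (tau j')) * (inX i j tau)%:R
    = \prod_j' G j' (zeta j').
  transitivity (\sum_(tau : Alloc s c x zeta) \prod_j' (alloc_prob (tau j') *
      (if j' == j then (i \in (tau j' : seq S))%:R else 1))).
    apply: eq_bigr => tau _; rewrite big_split /=; congr (_ * _).
    by rewrite (bigD1 j) //= eqxx big1 ?mulr1 // => j' /negbTE ->.
  rewrite -(bigA_distr_dffun (fun j' (t : (size (slots j' (zeta j'))).-tuple S) =>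
     alloc_prob t * (if j' == j then (i \in (t : seq S))%:R else 1))).
  apply: eq_bigr => j' _; rewrite /G /node_hit /node_mass; case: (j' == j) => //.
  by apply: eq_bigr => t _; rewrite mulr1.
rewrite /prob.
under eq_bigr do rewrite inner -big_split /=.
rewrite -(bigA_distr_bigA (fun j' z => zeta_prob j' z * G j' z)) (bigD1 j) //=.
rewrite [X in _ * X]big1 ?mulr1.
  by apply: eq_bigr => z _; rewrite /G eqxx.
move=> j' /negbTE j'_neq; rewrite -[RHS](node_mass_total j').
by apply: eq_bigr => z _; rewrite /G j'_neq.
Qed.

Hypotheses (s_gt0 : forall i, 0 < s i) (c_gt0 : forall j, 0 < c j).
Hypothesis capacity : forall j, \sum_(i : S) x i j * s i <= c j.

Definition small_load j := \sum_(i | s i <= c j * beta R) s i * x i j.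

Lemma small_load_ge0 j : 0 <= small_load j.
Proof. by apply: sumr_ge0 => i _; rewrite mulr_ge0 // ltW. Qed.

Lemma load_split j : c j / 2 * dd j Cplus + c j / 4 * dd j Cminus + small_load j <= c j.
Proof.
apply: le_trans (capacity j).
rewrite /Defs.dd /small_load !mulr_sumr [X in X + _ + _]big_mkcond.
rewrite [X in _ + X + _]big_mkcond [X in _ + X <= _]big_mkcond -!big_split /=.
apply: ler_sum => i _; have := x_ge0 i j; have := s_gt0 i; have := c_gt0 j.
rewrite /Defs.inP /beta.
by case: ifP => [/andP[? ?]|?]; case: ifP => [/andP[? ?]|?]; case: ifP => ? *; nra.
Qed.

Lemma zeta_prob3_lower j : delta R <= zeta_prob j z3 /\ small_load j / c j <= zeta_prob j z3.
Proof.
have cj_gt0 := c_gt0 j.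
have load : dd j Cplus / 2 + dd j Cminus / 4 + small_load j / c j <= 1.
  rewrite -(ler_pM2l cj_gt0) mulr1; apply: le_trans (load_split j).
  by rewrite le_eqVlt; apply/orP; left; apply/eqP; field; rewrite gt_eqF.
have dp_ge0 := dd_ge0 j Cplus; have dm_ge0 := dd_ge0 j Cminus.
have : 0 <= small_load j / c j by rewrite divr_ge0 ?small_load_ge0 ?ltW.
by rewrite /zeta_prob /Defs.hh /delta /=; case: ltrP => ? ?; split; lra.
Qed.

Lemma zeta_prob_ge0 j z : 0 <= zeta_prob j z.
Proof.
have [z3_ge _] := zeta_prob3_lower j.
have dp_ge0 := dd_ge0 j Cplus; have dm_ge0 := dd_ge0 j Cminus.
move: z3_ge; rewrite /zeta_prob /Defs.hh /delta.
by case: z => -[|[|[|?]]] ? /=; case: ifP => _; lra.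
Qed.

Lemma vv_dd_le_nn j q : vv j * dd j (Cq q) <= (nn j q)%:R.
Proof.
have vd_ge0 : 0 <= vv j * dd j (Cq q).
  by rewrite mulr_ge0 ?dd_ge0 // divr_ge0 ?small_load_ge0 // mulr_ge0 ?ltW // /delta; lra.
by rewrite /Defs.nn natr_absz ger0_norm ?ceil_ge // ceil_ge0; lra.
Qed.

Lemma hit_bound_plus i j : inP j Cplus i -> 0 < x i j ->
  delta R * (1 - expR (- x i j)) <= zeta_prob j z1 * node_hit j z1 i.
Proof.
move=> Pi x_gt0; have d_gt0 : 0 < dd j Cplus := lt_le_trans x_gt0 (dd_ge_x Pi).
rewrite node_hitE /Defs.slots /= !big_cons !big_nil !mulr1 slot_massE (gt_eqF d_gt0).
have -> : zeta_prob j z1 * (1 - (1 - slot_prob j Cplus i)) = delta R * x i j.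
  by rewrite /zeta_prob /slot_prob Pi /=; field; rewrite gt_eqF.
by have := expR_ge1Dx (- x i j); rewrite /delta; lra.
Qed.

Lemma hit_bound_minus i j : inP j Cminus i -> 0 < x i j -> x i j <= 1 ->
  delta R * (1 - expR (- x i j)) <= zeta_prob j z2 * node_hit j z2 i.
Proof.
move=> Pi x_gt0 x_le1; have x_le_d := dd_ge_x Pi.
have d_gt0 : 0 < dd j Cminus := lt_le_trans x_gt0 x_le_d.
rewrite node_hitE /Defs.slots /= !big_cons !big_nil !mulr1 slot_massE (gt_eqF d_gt0).
rewrite /zeta_prob /slot_prob Pi /= mul1r.
set p := x i j / dd j Cminus.
have pd : p * dd j Cminus = x i j by rewrite divfK ?gt_eqF.
have p_ge0 : 0 <= p by rewrite divr_ge0 ?ltW.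
have p_le1 : p <= 1 by rewrite ler_pdivrMr // mul1r.
rewrite /Defs.hh /delta; case: ltrP => [_|d_ge2].
  by have := expR_ge1Dx (- x i j); nra.
have x_le2 : x i j <= 2 by lra.
by have := sqr_half_le_expR x_le2; nra.
Qed.

Lemma node_hit3E i j q : q \in iota 1 (qbound s c j) -> inP j (Cq q) i ->
  node_hit j z3 i = 1 - (1 - x i j / dd j (Cq q)) ^+ nn j q.
Proof.
move=> q_in Pi; rewrite node_hitE -node_massE node_mass3 big_slots3.
rewrite (bigD1_seq q) ?iota_uniq //= big1_seq ?mulr1.
  have [->|/nn_gt0_dd_neq0 dn0] := posnP (nn j q); first by rewrite !expr0.
  by rewrite slot_massE dn0 /slot_prob Pi.
move=> q' /andP[q'_neq _]; rewrite /slot_prob.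
case: ifP => [Pi'|_]; last by rewrite subr0 slot_mass_expr_nn.
by rewrite (inP_Cq_inj c_gt0 Pi Pi') eqxx in q'_neq.
Qed.

Lemma hit_bound_small i j q : q \in iota 1 (qbound s c j) -> inP j (Cq q) i -> 0 < x i j ->
  delta R * (1 - expR (- x i j)) <= zeta_prob j z3 * node_hit j z3 i.
Proof.
move=> q_in Pi x_gt0; rewrite (node_hit3E q_in Pi).
have x_le_d := dd_ge_x Pi; have d_gt0 := lt_le_trans x_gt0 x_le_d.
have q_gt0 : (0 < q)%N by move: q_in; rewrite mem_iota => /andP[].
have load_gt0 : 0 < small_load j.
  rewrite /small_load (bigD1 i) ?(inP_Cq_le c_gt0 q_gt0 Pi) //=.
  rewrite ltr_pwDl ?mulr_gt0 ?sumr_ge0 // => a _.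
  by rewrite mulr_ge0 // ltW.
have [F_ge F_load] := zeta_prob3_lower j.
have vE : vv j = delta R * c j / small_load j by [].
have v_ge0 : 0 <= vv j.
  by rewrite vE divr_ge0 ?(ltW load_gt0) // mulr_ge0 ?(ltW (c_gt0 j)) // /delta; lra.
have a_le_Fv : delta R <= zeta_prob j z3 * vv j.
  apply: le_trans (ler_wpM2r v_ge0 F_load); rewrite vE le_eqVlt; apply/orP; left.
  by apply/eqP; field; rewrite !gt_eqF.
set p := x i j / dd j (Cq q).
have pd : p * dd j (Cq q) = x i j by rewrite divfK ?gt_eqF.
have p01 : 0 <= p <= 1.
  by rewrite /p divr_ge0 ?ler_pdivrMr ?mul1r ?x_ge0 ?(ltW d_gt0).
have miss_le : (1 - p) ^+ nn j q <= expR (- (vv j * x i j)).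
  apply: le_trans (exprn_oneB_le_expR _ p01) _.
  rewrite ler_expR lerN2 -pd mulrCA [X in X <= _]mulrC.
  by apply: ler_wpM2r (vv_dd_le_nn j q); case/andP: p01.
apply: le_trans (_ : zeta_prob j z3 * (1 - expR (- (vv j * x i j))) <= _).
  by apply: (oneB_expR_rescale _ v_ge0 (ltW x_gt0) F_ge a_le_Fv); rewrite /delta; lra.
by apply: ler_wpM2l; [rewrite zeta_prob_ge0 | lra].
Qed.

End Experiment.

Theorem theorem17 (R : realType) (S V U : finType)
  (s : S -> R) (c : V -> R) (svc : U -> S) (T : U -> {set V}) (w : U -> R)
  (x : S -> V -> R) (y : U -> R)
  (hs : forall i, 0 < s i) (hc : forall j, 0 < c j) (hw : forall k, 0 < w k)
  (hopt : lp_optimal s c svc T w x y)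
  (i : S) (j : V) :
  delta R * (1 - expR (- x i j)) <= @prob R S V s c x (@inX R S V s c x i j).
Proof.
case: hopt => [[_ [_ [_ [capacity [oversized x01]]]]] _].
have x_ge0 i' j' : 0 <= x i' j' by case/andP: (x01 i' j').
have x_le1 : x i j <= 1 by case/andP: (x01 i j).
rewrite prob_inX sum_ord3.
have term_ge0 z : 0 <= zeta_prob s c x j z * node_hit s c x j z i.
  by rewrite mulr_ge0 ?node_hit_ge0 ?(zeta_prob_ge0 x_ge0 hs hc capacity).
have := term_ge0 z1; have := term_ge0 z2; have := term_ge0 z3.
have [x_le0|x_gt0] := lerP (x i j) 0.
  have -> : x i j = 0 by apply/le_anti; rewrite x_le0 x_ge0.
  by rewrite oppr0 expR0 subrr mulr0; lra.
have s_le_c : s i <= c j.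
  by rewrite leNgt; apply/negP => /oversized x0; rewrite x0 ltxx in x_gt0.
case: (size_class hs s_le_c) => [Pi | Pi | [q q_in Pi]].
- by have := hit_bound_plus x_ge0 Pi x_gt0; lra.
- by have := hit_bound_minus x_ge0 Pi x_gt0 x_le1; lra.
- by have := hit_bound_small x_ge0 hs hc capacity q_in Pi x_gt0; lra.
Qed.
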